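(* Consider the inner product on the parabola $y=x^2$ $$\langle f,g\rangle=\int_{\mathbb R}f(x,x^2)\,g(x,x^2)\,e^{-x^2}\,dx .$$ For $n\ge1$, the polynomials $$Y_{n,1}(x,y)=L_n^{-\frac12}(y),\qquad Y_{n,2}(x,y)=x\,L_{n-1}^{\frac12}(y)$$ form an orthogonal basis of $\mathcal H_n$, where $L_n^{\alpha}$ are the Laguerre polynomials. Moreover, both $u=Y_{n,1}$ and $u=Y_{n,2}$ satisfy $$x\,\partial_x\partial_y u+y\,\partial_y^2u+\big(\tfrac12-y\big)\partial_yu-x\,\partial_xu=-n\,u .$$
   Context: $L_n^{\alpha}$ denotes the Laguerre polynomial of degree $n$, orthogonal with respect to $t^{\alpha}e^{-t}$ on $[0,\infty)$. $\mathcal H_n$ denotes the space of polynomials $P$ of degree $n$ in two variables with $\langle P,Q\rangle=0$ for all polynomials $Q$ of degree $<n$ and $\langle P,P\rangle>0$, considered modulo the ideal $\langle y-x^2\rangle$; it has dimension 2 for $n\ge 1$. *)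

From Stdlib Require Import Reals Arith Factorial.
Open Scope R_scope.

Fixpoint falling (r : R) (m : nat) : R :=
  match m with
  | O => 1
  | S m' => falling r m' * (r - INR m')
  end.

Definition gbinom (r : R) (m : nat) : R := falling r m / INR (fact m).

(* Laguerre polynomial L_n^a(t) = sum_{k=0}^n (-1)^k binom(n+a, n-k) t^k / k! ,
   orthogonal w.r.t. t^a e^{-t} on [0,oo) (a > -1). *)
Definition laguerre (n : nat) (a : R) (t : R) : R :=
  sum_f_R0 (fun k => (-1) ^ k * gbinom (INR n + a) (n - k) * t ^ k / INR (fact k)) n.

Definition poly2_le (n : nat) (f : R -> R -> R) : Prop :=
  exists c : nat -> nat -> R, forall x y : R,
    f x y = sum_f_R0 (fun i => sum_f_R0 (fun j =>
              if Nat.leb (i + j) n then c i j * x ^ i * y ^ j else 0) n) n.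

Definition poly2 (f : R -> R -> R) : Prop := exists d : nat, poly2_le d f.

Definition poly2_deg (n : nat) (f : R -> R -> R) : Prop :=
  poly2_le n f /\ ~ poly2_le (n - 1) f.

Definition integral_R (h : R -> R) (l : R) : Prop :=
  forall eps : R, eps > 0 -> exists M : R, forall a b : R, a <= - M -> M <= b ->
    exists pr : Riemann_integrable h a b, Rabs (RiemannInt pr - l) < eps.

Definition ip (f g : R -> R -> R) (l : R) : Prop :=
  integral_R (fun x => f x (x ^ 2) * g x (x ^ 2) * exp (- x ^ 2)) l.

(* Membership in H_n as defined in the paper (a representative polynomial). *)
Definition in_Hn (n : nat) (P : R -> R -> R) : Prop :=
  poly2_deg n P /\
  (forall Q, poly2_le (n - 1) Q -> ip P Q 0) /\
  (exists l, ip P P l /\ l > 0).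

Definition cong_par (P Q : R -> R -> R) : Prop :=
  exists S, poly2 S /\ forall x y, P x y - Q x y = (y - x ^ 2) * S x y.

(* On the parabola a polynomial P(x, y) is seen only through p(x) = P(x, x^2), and
   <P, Q> becomes the Gaussian integral of p q.  Here Y1(x, x^2) = L_n^(-1/2)(x^2) is even
   and Y2(x, x^2) = x L_(n-1)^(1/2)(x^2) is odd; substituting t = x^2 turns the Gaussian
   moments into the Laguerre weights t^(-1/2) e^(-t) and t^(1/2) e^(-t), so orthogonality
   to every polynomial of degree < n is the Laguerre orthogonality, proved on coefficients
   as the vanishing of an n-th finite difference of a polynomial of degree < n.  The norms
   are positive because a continuous function nonzero at a point stays so nearby.  An element P of H_n restricts to a polynomial of
   degree <= 2n; removing suitable multiples of Y1 and Y2 leaves a polynomial of degree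
   < 2n, which lifts to some Q of degree < n and is therefore orthogonal to itself: it
   vanishes on the parabola, so P - a Y1 - b Y2 is divisible by y - x^2.  The PDE is the
   Laguerre equation t L'' + (a + 1 - t) L' + n L = 0. *)

From Stdlib Require Import Reals Lra Lia Factorial Classical.
From Coquelicot Require Import Coquelicot.
Open Scope R_scope.

(** * Improper integrals over the real line *)

Definition is_lim_ends (F : R -> R -> R) (l : R) : Prop :=
  forall eps, eps > 0 ->
    exists M, forall a b, a <= - M -> M <= b -> Rabs (F a b - l) < eps.

Lemma is_lim_ends_ext F G l :
  (forall a b, F a b = G a b) -> is_lim_ends F l -> is_lim_ends G l.
Proof.
  intros E H eps He; destruct (H eps He) as [M HM].
  exists M; intros a b Ha Hb; rewrite <- E; auto.
Qed.

Lemma is_lim_ends_plus F G l1 l2 :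
  is_lim_ends F l1 -> is_lim_ends G l2 ->
  is_lim_ends (fun a b => F a b + G a b) (l1 + l2).
Proof.
  intros HF HG eps He.
  destruct (HF (eps / 2)) as [M1 H1]; [lra|].
  destruct (HG (eps / 2)) as [M2 H2]; [lra|].
  exists (Rmax M1 M2); intros a b Ha Hb.
  pose proof (Rmax_l M1 M2); pose proof (Rmax_r M1 M2).
  specialize (H1 a b ltac:(lra) ltac:(lra)); specialize (H2 a b ltac:(lra) ltac:(lra)).
  replace (F a b + G a b - (l1 + l2)) with ((F a b - l1) + (G a b - l2)) by ring.
  eapply Rle_lt_trans; [apply Rabs_triang|]; lra.
Qed.

Lemma is_lim_ends_scal F l c :
  is_lim_ends F l -> is_lim_ends (fun a b => c * F a b) (c * l).
Proof.
  intros HF eps He.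
  pose proof (Rabs_pos c).
  destruct (HF (eps / (Rabs c + 1))) as [M HM]; [apply Rdiv_lt_0_compat; lra|].
  exists M; intros a b Ha Hb; specialize (HM a b Ha Hb).
  replace (c * F a b - c * l) with (c * (F a b - l)) by ring; rewrite Rabs_mult.
  apply Rle_lt_trans with (Rabs c * (eps / (Rabs c + 1))).
  - apply Rmult_le_compat_l; lra.
  - replace (Rabs c * (eps / (Rabs c + 1))) with (eps - eps / (Rabs c + 1)) by (field; lra).
    assert (0 < eps / (Rabs c + 1)) by (apply Rdiv_lt_0_compat; lra); lra.
Qed.

Lemma is_lim_ends_unique F l1 l2 : is_lim_ends F l1 -> is_lim_ends F l2 -> l1 = l2.
Proof.
  intros H1 H2; destruct (Req_dec l1 l2) as [|Hne]; auto.
  assert (Hp : Rabs (l1 - l2) > 0) by (apply Rabs_pos_lt; lra).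
  destruct (H1 (Rabs (l1 - l2) / 2)) as [M1 A1]; [lra|].
  destruct (H2 (Rabs (l1 - l2) / 2)) as [M2 A2]; [lra|].
  set (M := Rmax M1 M2); pose proof (Rmax_l M1 M2); pose proof (Rmax_r M1 M2).
  specialize (A1 (- M) M ltac:(unfold M; lra) ltac:(unfold M; lra)).
  specialize (A2 (- M) M ltac:(unfold M; lra) ltac:(unfold M; lra)).
  assert (Rabs (l1 - l2) <= Rabs (F (- M) M - l2) + Rabs (F (- M) M - l1)).
  { replace (l1 - l2) with ((F (- M) M - l2) - (F (- M) M - l1)) by ring.
    eapply Rle_trans; [apply Rabs_triang|]; rewrite Rabs_Ropp; lra. }
  lra.
Qed.

Definition vanishes_at_infty (phi : R -> R) : Prop :=
  forall eps, eps > 0 -> exists M, forall x, M <= Rabs x -> Rabs (phi x) < eps.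

Lemma is_lim_ends_increment phi :
  vanishes_at_infty phi -> is_lim_ends (fun a b => phi b - phi a) 0.
Proof.
  intros H eps He; destruct (H (eps / 2)) as [M HM]; [lra|].
  exists (Rmax M 0); intros a b Ha Hb.
  pose proof (Rmax_l M 0); pose proof (Rmax_r M 0).
  assert (A1 := HM b ltac:(rewrite Rabs_pos_eq; lra)).
  assert (A2 := HM a ltac:(rewrite Rabs_left1; lra)).
  rewrite Rminus_0_r; unfold Rminus.
  eapply Rle_lt_trans; [apply Rabs_triang|]; rewrite Rabs_Ropp; lra.
Qed.


Definition is_RInt_R (f : R -> R) (l : R) : Prop :=
  (forall a b, ex_RInt f a b) /\ is_lim_ends (fun a b => RInt f a b) l.

Lemma is_RInt_R_ext f g l :
  (forall x, f x = g x) -> is_RInt_R f l -> is_RInt_R g l.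
Proof.
  intros E [H1 H2]; split.
  - intros a b; apply (ex_RInt_ext f); auto.
  - apply (is_lim_ends_ext (fun a b => RInt f a b)); auto.
    intros a b; apply RInt_ext; auto.
Qed.

Lemma is_RInt_R_eq f l l' : is_RInt_R f l -> l = l' -> is_RInt_R f l'.
Proof. intros H ->; exact H. Qed.

Lemma is_RInt_R_plus f g l1 l2 :
  is_RInt_R f l1 -> is_RInt_R g l2 -> is_RInt_R (fun x => f x + g x) (l1 + l2).
Proof.
  intros [F1 F2] [G1 G2]; split.
  - intros a b; apply (ex_RInt_plus f g); auto.
  - apply (is_lim_ends_ext (fun a b => RInt f a b + RInt g a b)).
    + intros a b; symmetry; apply (RInt_plus f g); auto.
    + apply is_lim_ends_plus; auto.
Qed.

Lemma is_RInt_R_scal f l c : is_RInt_R f l -> is_RInt_R (fun x => c * f x) (c * l).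
Proof.
  intros [F1 F2]; split.
  - intros a b; apply (ex_RInt_scal f); auto.
  - apply (is_lim_ends_ext (fun a b => c * RInt f a b)).
    + intros a b; symmetry; apply (RInt_scal f); auto.
    + apply is_lim_ends_scal; auto.
Qed.

Lemma is_RInt_R_zero : is_RInt_R (fun _ => 0) 0.
Proof.
  split.
  - intros a b; apply ex_RInt_const.
  - intros eps He; exists 0; intros a b _ _.
    rewrite RInt_const; unfold scal; simpl; unfold mult; simpl.
    rewrite Rmult_0_r, Rminus_0_r, Rabs_R0; lra.
Qed.

Lemma is_RInt_R_sum (F : nat -> R -> R) (v : nat -> R) d :
  (forall k, (k <= d)%nat -> is_RInt_R (F k) (v k)) ->
  is_RInt_R (fun x => sum_f_R0 (fun k => F k x) d) (sum_f_R0 v d).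
Proof.
  induction d as [|d IH]; intros H; simpl.
  - apply H; lia.
  - apply (is_RInt_R_plus (fun x => sum_f_R0 (fun k => F k x) d) (F (S d))).
    + apply IH; intros; apply H; lia.
    + apply H; lia.
Qed.

Lemma is_RInt_R_unique f l1 l2 : is_RInt_R f l1 -> is_RInt_R f l2 -> l1 = l2.
Proof. intros [_ A] [_ B]; eapply is_lim_ends_unique; eauto. Qed.

Lemma is_RInt_R_integral_R f l : is_RInt_R f l -> integral_R f l.
Proof.
  intros [H1 H2] eps He; destruct (H2 eps He) as [M HM].
  exists M; intros a b Ha Hb.
  exists (ex_RInt_Reals_0 f a b (H1 a b)); rewrite <- RInt_Reals; auto.
Qed.

Lemma integral_R_is_RInt_R f l :
  (forall a b, ex_RInt f a b) -> integral_R f l -> is_RInt_R f l.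
Proof.
  intros H1 H2; split; auto; intros eps He.
  destruct (H2 eps He) as [M HM]; exists M; intros a b Ha Hb.
  destruct (HM a b Ha Hb) as [pr Hpr]; rewrite <- RInt_Reals in Hpr; auto.
Qed.

Lemma is_RInt_R_pos h c l :
  (forall x, 0 <= h x) -> continuity_pt h c -> 0 < h c -> is_RInt_R h l -> 0 < l.
Proof.
  intros Hh0 Hc Hpos [Hex Hlim].
  destruct (Hc (h c / 2)) as [d [Hd Hnear]]; [lra|].
  set (c1 := c - d / 2); set (c2 := c + d / 2).
  assert (Hlow : forall x, c1 <= x <= c2 -> h c / 2 <= h x).
  { intros x Hx; destruct (Req_dec x c) as [->|Hne]; [lra|].
    assert (Hdist : R_dist (h x) (h c) < h c / 2).
    { apply Hnear; split; [split; [exact I | auto] |].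
      unfold R_dist, c1, c2 in *; apply Rabs_def1; lra. }
    unfold R_dist in Hdist; apply Rabs_def2 in Hdist; lra. }
  assert (Hmid : d * (h c / 2) <= RInt h c1 c2).
  { apply Rle_trans with (RInt (fun _ => h c / 2) c1 c2).
    - rewrite RInt_const; unfold scal; simpl; unfold mult; simpl; unfold c1, c2; lra.
    - apply RInt_le; [unfold c1, c2; lra | apply ex_RInt_const | apply Hex | intros x Hx; apply Hlow; lra]. }
  destruct (Hlim (d * (h c / 2) / 2)) as [M HM]; [nra|].
  set (a := Rmin (- M) c1); set (b := Rmax M c2).
  specialize (HM a b (Rmin_l _ _) (Rmax_l _ _)).
  rewrite <- (RInt_Chasles h a c1 b), <- (RInt_Chasles h c1 c2 b) in HM by apply Hex.
  assert (0 <= RInt h a c1) by (apply RInt_ge_0; [apply Rmin_r | apply Hex | auto]).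
  assert (0 <= RInt h c2 b) by (apply RInt_ge_0; [apply Rmax_r | apply Hex | auto]).
  unfold plus in HM; simpl in HM; apply Rabs_def2 in HM; lra.
Qed.

(** * Gaussian moments *)

Definition gauss_mon (j : nat) (x : R) : R := x ^ j * exp (- x ^ 2).

Lemma pow_div_fact_le_exp (t : R) (N : nat) : 0 <= t -> t ^ N / INR (fact N) <= exp t.
Proof.
  intros Ht; eapply Rle_trans; [|apply (exp_ge_taylor t N Ht)].
  destruct N as [|N]; [simpl; lra|].
  change (sum_f_R0 (fun k => t ^ k / INR (fact k)) (S N)) with
    (sum_f_R0 (fun k => t ^ k / INR (fact k)) N + t ^ S N / INR (fact (S N))).
  assert (0 <= sum_f_R0 (fun k => t ^ k / INR (fact k)) N); [|lra].
  apply cond_pos_sum; intros k; apply Rmult_le_pos; [apply pow_le; auto|].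
  left; apply Rinv_0_lt_compat, lt_0_INR, lt_O_fact.
Qed.

(* [|x|^(j+1) <= x^(2j+2) <= (j+1)! e^(x^2)] for [|x| >= 1]. *)
Lemma gauss_mon_vanishes j : vanishes_at_infty (gauss_mon j).
Proof.
  intros eps He; set (K := INR (fact (S j))).
  assert (HK : 0 < K) by apply lt_0_INR, lt_O_fact.
  exists (K / eps + 1); intros x Hx.
  assert (HKe : 0 < K / eps) by (apply Rdiv_lt_0_compat; lra).
  unfold gauss_mon; set (A := Rabs x) in *; set (E := exp (x ^ 2)).
  assert (HE : 0 < E) by apply exp_pos.
  rewrite Rabs_mult, <- RPow_abs, (Rabs_pos_eq (exp _)) by (left; apply exp_pos).
  rewrite exp_Ropp; fold A E.
  assert (H1 : A ^ S j <= A ^ (2 * S j)) by (apply Rle_pow; [lra | lia]).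
  assert (H2 : A ^ (2 * S j) = (x ^ 2) ^ S j)
    by (rewrite pow_mult; unfold A; rewrite pow2_abs; auto).
  assert (H3 : (x ^ 2) ^ S j / K <= E) by (apply pow_div_fact_le_exp; nra).
  assert (H4 : A * A ^ j <= K * E).
  { change (A * A ^ j) with (A ^ S j); rewrite H2 in H1.
    apply (Rmult_le_compat_l K) in H3; [|lra].
    replace (K * ((x ^ 2) ^ S j / K)) with ((x ^ 2) ^ S j) in H3 by (field; lra); lra. }
  assert (H5 : A ^ j * / E * A <= K).
  { apply (Rmult_le_reg_r E); auto.
    replace (A ^ j * / E * A * E) with (A * A ^ j) by (field; lra); lra. }
  assert (H6 : K < eps * A).
  { replace K with (eps * (K / eps)) by (field; lra); apply Rmult_lt_compat_l; lra. }
  assert (0 <= A ^ j * / E)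
    by (apply Rmult_le_pos; [apply pow_le; unfold A; apply Rabs_pos | left; apply Rinv_0_lt_compat; lra]).
  nra.
Qed.

Lemma continuous_gauss_mon j x : continuous (gauss_mon j) x.
Proof.
  apply (@ex_derive_continuous R_AbsRing R_NormedModule); unfold gauss_mon; auto_derive; easy.
Qed.

Lemma ex_RInt_gauss_mon j a b : ex_RInt (gauss_mon j) a b.
Proof. apply (@ex_RInt_continuous R_CompleteNormedModule); intros; apply continuous_gauss_mon. Qed.

(* Integration by parts: [(x^j e^(-x^2))' = j x^(j-1) e^(-x^2) - 2 x^(j+1) e^(-x^2)]. *)
Lemma RInt_gauss_mon_S j a b :
  RInt (gauss_mon (S j)) a b
  = INR j / 2 * RInt (gauss_mon (pred j)) a b - (gauss_mon j b - gauss_mon j a) / 2.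
Proof.
  assert (Hd : is_RInt (fun x => INR j * gauss_mon (pred j) x - 2 * gauss_mon (S j) x) a b
                 (minus (gauss_mon j b) (gauss_mon j a))).
  { apply (@is_RInt_derive R_CompleteNormedModule).
    - intros x _; unfold gauss_mon; auto_derive; [easy | simpl; ring].
    - intros x _; apply (@ex_derive_continuous R_AbsRing R_NormedModule).
      unfold gauss_mon; auto_derive; easy. }
  apply (@is_RInt_unique R_CompleteNormedModule) in Hd.
  rewrite (RInt_minus (fun x => INR j * gauss_mon (pred j) x) (fun x => 2 * gauss_mon (S j) x))
    in Hd by (apply (ex_RInt_scal (V := R_CompleteNormedModule)), ex_RInt_gauss_mon).
  rewrite (RInt_scal (gauss_mon (pred j))), (RInt_scal (gauss_mon (S j))) in Hd
    by apply ex_RInt_gauss_mon.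
  unfold minus, plus, opp, scal in Hd; simpl in Hd; unfold mult in Hd; simpl in Hd.
  lra.
Qed.

Lemma is_RInt_R_gauss_mon_S j v :
  is_RInt_R (gauss_mon (pred j)) v -> is_RInt_R (gauss_mon (S j)) (INR j / 2 * v).
Proof.
  intros [_ Hv]; split; [apply ex_RInt_gauss_mon|].
  apply (is_lim_ends_ext (fun a b => INR j / 2 * RInt (gauss_mon (pred j)) a b
                                     + (- / 2) * (gauss_mon j b - gauss_mon j a))).
  { intros a b; rewrite RInt_gauss_mon_S; field. }
  replace (INR j / 2 * v) with (INR j / 2 * v + (- / 2) * 0) by ring.
  apply is_lim_ends_plus; apply is_lim_ends_scal; auto.
  apply is_lim_ends_increment, gauss_mon_vanishes.
Qed.

(* [e^(-x^2) <= e^(1-2x)] because [(x-1)^2 >= 0]. *)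
Lemma RInt_gauss_le b : 0 <= b -> RInt (gauss_mon 0) 0 b <= exp 1 / 2.
Proof.
  intros Hb; set (g := fun x => - exp (1 - 2 * x) / 2).
  assert (Hr : is_RInt (fun x => exp (1 - 2 * x)) 0 b (minus (g b) (g 0))).
  { apply (@is_RInt_derive R_CompleteNormedModule g).
    - intros x _; unfold g; auto_derive; [easy|].
      replace (1 + - (2 * x)) with (1 - 2 * x) by ring; field.
    - intros x _; apply (@ex_derive_continuous R_AbsRing R_NormedModule); auto_derive; easy. }
  apply (@is_RInt_unique R_CompleteNormedModule) in Hr.
  apply Rle_trans with (RInt (fun x => exp (1 - 2 * x)) 0 b).
  - apply RInt_le; auto; [apply ex_RInt_gauss_mon | |].
    + apply (@ex_RInt_continuous R_CompleteNormedModule); intros.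
      apply (@ex_derive_continuous R_AbsRing R_NormedModule); auto_derive; easy.
    + intros x _; unfold gauss_mon; rewrite pow_O, Rmult_1_l.
      assert (Hle : - x ^ 2 <= 1 - 2 * x).
      { replace (1 - 2 * x) with (- x ^ 2 + (x - 1) ^ 2) by ring.
        pose proof (pow2_ge_0 (x - 1)); lra. }
      destruct Hle as [Hlt | ->]; [left; apply exp_increasing, Hlt | right; reflexivity].
  - rewrite Hr; unfold g, minus, plus, opp; simpl.
    replace (1 - 2 * 0) with 1 by ring.
    assert (0 < exp (1 - 2 * b)) by apply exp_pos; lra.
Qed.

Lemma increasing_bounded_limit (F : R -> R) K :
  (forall b b', 0 <= b <= b' -> F b <= F b') -> (forall b, 0 <= b -> F b <= K) ->
  exists l, forall eps, eps > 0 ->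
    exists B, 0 <= B /\ forall b, B <= b -> Rabs (F b - l) < eps.
Proof.
  intros Hmono Hbound.
  set (E := fun y => exists b, 0 <= b /\ y = F b).
  assert (HB : bound E) by (exists K; intros y [b [Hb ->]]; auto).
  assert (HE : exists y, E y) by (exists (F 0), 0; split; [lra | auto]).
  destruct (completeness E HB HE) as [l [Hub Hlub]].
  exists l; intros eps He.
  destruct (classic (exists b0, 0 <= b0 /\ F b0 > l - eps)) as [[b0 [Hb0 Hf]] | Hn].
  - exists b0; split; auto; intros b Hb.
    assert (F b <= l) by (apply Hub; exists b; split; auto; lra).
    assert (F b0 <= F b) by (apply Hmono; lra).
    rewrite Rabs_left1 by lra; lra.
  - exfalso; assert (l <= l - eps); [|lra].
    apply Hlub; intros y [b [Hb ->]].
    apply Rnot_lt_le; intro; apply Hn; exists b; split; auto; lra.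
Qed.

Lemma RInt_gauss_opp a : RInt (gauss_mon 0) a 0 = RInt (gauss_mon 0) 0 (- a).
Proof.
  assert (H := RInt_comp_lin (gauss_mon 0) (-1) 0 a 0 (ex_RInt_gauss_mon _ _ _)).
  rewrite (RInt_ext (fun y => scal (-1) (gauss_mon 0 (-1 * y + 0)))
                    (fun y => scal (-1) (gauss_mon 0 y))) in H
    by (intros x _; unfold gauss_mon; f_equal; f_equal; f_equal; ring).
  rewrite (RInt_scal (V := R_CompleteNormedModule) (gauss_mon 0)) in H
    by apply ex_RInt_gauss_mon.
  replace (-1 * a + 0) with (- a) in H by ring; replace (-1 * 0 + 0) with 0 in H by ring.
  rewrite <- (opp_RInt_swap (gauss_mon 0) 0 (- a)) in H by apply ex_RInt_gauss_mon.
  unfold scal, opp in H; simpl in H; unfold mult in H; simpl in H; lra.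
Qed.

Lemma is_RInt_R_gauss_ex : exists M, is_RInt_R (gauss_mon 0) M.
Proof.
  set (F := fun b => RInt (gauss_mon 0) 0 b).
  destruct (increasing_bounded_limit F (exp 1 / 2)) as [l Hl].
  { intros b b' Hbb; unfold F.
    rewrite <- (RInt_Chasles (gauss_mon 0) 0 b b') by apply ex_RInt_gauss_mon.
    assert (0 <= RInt (gauss_mon 0) b b'); [|unfold plus; simpl; lra].
    apply RInt_ge_0; [lra | apply ex_RInt_gauss_mon |].
    intros; unfold gauss_mon; rewrite pow_O, Rmult_1_l; left; apply exp_pos. }
  { apply RInt_gauss_le. }
  exists (2 * l); split; [apply ex_RInt_gauss_mon|].
  intros eps He; destruct (Hl (eps / 2)) as [B [HB0 HB]]; [lra|].
  exists B; intros a b Ha Hb.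
  rewrite <- (RInt_Chasles (gauss_mon 0) a 0 b) by apply ex_RInt_gauss_mon.
  unfold plus; simpl; rewrite RInt_gauss_opp.
  assert (A1 := HB (- a) ltac:(lra)); assert (A2 := HB b Hb); unfold F in A1, A2.
  replace (RInt (gauss_mon 0) 0 (- a) + RInt (gauss_mon 0) 0 b - 2 * l)
    with ((RInt (gauss_mon 0) 0 (- a) - l) + (RInt (gauss_mon 0) 0 b - l)) by ring.
  eapply Rle_lt_trans; [apply Rabs_triang | lra].
Qed.

Fixpoint gauss_moment (M : R) (j : nat) : R :=
  match j with
  | O => M
  | S O => 0
  | S (S k) => INR (S k) / 2 * gauss_moment M k
  end.

Lemma gauss_moment_odd M k : gauss_moment M (S (2 * k)) = 0.
Proof.
  induction k as [|k IH]; [reflexivity|].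
  replace (S (2 * S k)) with (S (S (S (2 * k)))) by lia.
  change (INR (S (S (2 * k))) / 2 * gauss_moment M (S (2 * k)) = 0); rewrite IH; ring.
Qed.

Lemma gauss_moments_ex : exists M, forall j, is_RInt_R (gauss_mon j) (gauss_moment M j).
Proof.
  destruct is_RInt_R_gauss_ex as [M HM]; exists M.
  assert (H : forall j, is_RInt_R (gauss_mon j) (gauss_moment M j)
                        /\ is_RInt_R (gauss_mon (S j)) (gauss_moment M (S j))).
  { induction j as [|j [IH1 IH2]]; split.
    - exact HM.
    - apply (is_RInt_R_eq _ (INR 0 / 2 * M)); [apply (is_RInt_R_gauss_mon_S 0), HM|].
      simpl; field.
    - exact IH2.
    - change (gauss_moment M (S (S j))) with (INR (S j) / 2 * gauss_moment M j).
      exact (is_RInt_R_gauss_mon_S (S j) _ IH1). }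
  intros j; exact (proj1 (H j)).
Qed.

(** * Finite differences and Laguerre coefficients *)

Fixpoint rising (x : R) (p : nat) : R :=
  match p with O => 1 | S p' => rising x p' * (x + INR p') end.

Lemma rising_S x p : rising x (S p) = x * rising (x + 1) p.
Proof.
  induction p as [|p IH]; [simpl; ring|].
  change (rising x (S (S p))) with (rising x (S p) * (x + INR (S p))).
  rewrite IH; simpl rising; rewrite S_INR; ring.
Qed.

Fixpoint diffn_zero (n : nat) (f : nat -> R) : Prop :=
  match n with
  | O => forall k, f k = 0
  | S n' => diffn_zero n' (fun k => f (S k) - f k)
  end.

Lemma diffn_zero_ext n : forall f g, (forall k, f k = g k) -> diffn_zero n f -> diffn_zero n g.
Proof.
  induction n as [|n IH]; simpl; intros f g E H.
  - intros k; rewrite <- E; auto.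
  - apply (IH (fun k => f (S k) - f k)); auto; intros k; rewrite !E; auto.
Qed.

Lemma diffn_zero_scal n : forall f c, diffn_zero n f -> diffn_zero n (fun k => c * f k).
Proof.
  induction n as [|n IH]; simpl; intros f c H.
  - intros k; rewrite H; ring.
  - apply (diffn_zero_ext n (fun k => c * (f (S k) - f k))); [intros; ring | auto].
Qed.

Lemma diffn_zero_S n : forall f, diffn_zero n f -> diffn_zero (S n) f.
Proof.
  induction n as [|n IH]; intros f H; [simpl in *; intros k; rewrite !H; ring | exact (IH _ H)].
Qed.

Lemma diffn_zero_le n m f : (n <= m)%nat -> diffn_zero n f -> diffn_zero m f.
Proof. intros Hle H; induction Hle; auto using diffn_zero_S. Qed.

(* [Delta (k + c)^(p rising) = p (k + c + 1)^(p-1 rising)]. *)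
Lemma diffn_zero_rising p : forall c, diffn_zero (S p) (fun k => rising (INR k + c) p).
Proof.
  induction p as [|p IH]; intros c; [simpl; intros; ring|].
  change (diffn_zero (S p) (fun k => rising (INR (S k) + c) (S p) - rising (INR k + c) (S p))).
  apply (diffn_zero_ext (S p) (fun k => INR (S p) * rising (INR k + (c + 1)) p)).
  - intros k; rewrite (S_INR k); replace (INR k + 1 + c) with (INR k + c + 1) by ring.
    rewrite (rising_S (INR k + c) p).
    change (rising (INR k + c + 1) (S p))
      with (rising (INR k + c + 1) p * (INR k + c + 1 + INR p)).
    replace (INR k + (c + 1)) with (INR k + c + 1) by ring; rewrite S_INR; ring.
  - apply diffn_zero_scal, IH.
Qed.

(* Binomial coefficients by Pascal's rule, so that [binomR n k = 0] for [k > n]. *)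
Fixpoint binomR (n k : nat) : R :=
  match n, k with
  | _, O => 1
  | O, S _ => 0
  | S n', S k' => binomR n' k' + binomR n' (S k')
  end.

Lemma binomR_gt n : forall k, (n < k)%nat -> binomR n k = 0.
Proof.
  induction n as [|n IH]; intros k Hk; destruct k; try lia; simpl; auto.
  rewrite !IH by lia; ring.
Qed.

Lemma binomR_diag n : binomR n n = 1.
Proof. induction n as [|n IH]; simpl; auto; rewrite IH, binomR_gt by lia; ring. Qed.

Lemma binomR_fact n : forall k, (k <= n)%nat ->
  binomR n k * INR (fact k) * INR (fact (n - k)) = INR (fact n).
Proof.
  induction n as [|n IH]; intros k Hk.
  - destruct k; [simpl; ring | lia].
  - destruct k as [|k]; [rewrite Nat.sub_0_r; simpl binomR; simpl fact; simpl INR; ring|].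
    destruct (Nat.eq_dec k n) as [->|Hkn].
    { rewrite binomR_diag, Nat.sub_diag; simpl INR; ring. }
    simpl binomR; replace (S n - S k)%nat with (S (n - S k)) by lia.
    assert (H1 := IH k ltac:(lia)); assert (H2 := IH (S k) ltac:(lia)).
    replace (n - k)%nat with (S (n - S k)) in H1 by lia.
    rewrite (fact_simpl k), (fact_simpl (n - S k)), (fact_simpl n), !mult_INR.
    rewrite (fact_simpl (n - S k)), mult_INR in H1; rewrite (fact_simpl k), mult_INR in H2.
    assert (Hm : INR (S (n - S k)) = INR n - INR k)
      by (rewrite S_INR, minus_INR by lia; rewrite S_INR; ring).
    rewrite Hm in *; rewrite !S_INR in *.
    transitivity ((INR k + 1) * (binomR n k * INR (fact k) * ((INR n - INR k) * INR (fact (n - S k))))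
                  + (INR n - INR k) * (binomR n (S k) * ((INR k + 1) * INR (fact k)) * INR (fact (n - S k))));
      [ring | rewrite H1, H2; ring].
Qed.

Lemma sum_opp (A : nat -> R) n : sum_f_R0 (fun i => - A i) n = - sum_f_R0 A n.
Proof. induction n as [|n IH]; simpl; [|rewrite IH]; ring. Qed.

Definition alt_binom_sum (n : nat) (f : nat -> R) : R :=
  sum_f_R0 (fun k => (-1) ^ k * binomR n k * f k) n.

Lemma alt_binom_sum_S n f :
  alt_binom_sum (S n) f = - alt_binom_sum n (fun k => f (S k) - f k).
Proof.
  unfold alt_binom_sum; set (G := fun k => (-1) ^ k * binomR n k * f k).
  assert (E1 : sum_f_R0 G (S n) = G 0%nat + sum_f_R0 (fun k => G (S k)) n)
    by (rewrite (decomp_sum G (S n)) by lia; reflexivity).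
  assert (E2 : sum_f_R0 G (S n) = sum_f_R0 G n)
    by (simpl; unfold G at 2; rewrite binomR_gt by lia; ring).
  rewrite decomp_sum by lia; simpl pred.
  rewrite (sum_eq (fun i => (-1) ^ S i * binomR (S n) (S i) * f (S i))
                  (fun i => - ((-1) ^ i * binomR n i * f (S i)) + G (S i)))
    by (intros i _; unfold G; simpl; ring).
  rewrite sum_plus, sum_opp.
  rewrite (sum_eq (fun k => (-1) ^ k * binomR n k * (f (S k) - f k))
                  (fun k => (-1) ^ k * binomR n k * f (S k) + - G k))
    by (intros; unfold G; ring).
  rewrite sum_plus, sum_opp.
  assert (G 0%nat = f 0%nat) by (unfold G; simpl; destruct n; simpl; ring).
  simpl pow; simpl binomR; lra.
Qed.

Lemma alt_binom_sum_diffn_zero n : forall f, diffn_zero n f -> alt_binom_sum n f = 0.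
Proof.
  induction n as [|n IH]; intros f H.
  - unfold alt_binom_sum; simpl in *; rewrite H; ring.
  - rewrite alt_binom_sum_S, IH; [ring | exact H].
Qed.

Definition laguerre_coef (n : nat) (a : R) (k : nat) : R :=
  (-1) ^ k * gbinom (INR n + a) (n - k) / INR (fact k).

Section GammaMoments.

(* [g j] stands for [Gamma(j + a + 1)], the [j]-th moment of [t^a e^(-t)] on [(0, oo)]. *)
Variables (a : R) (g : nat -> R).
Hypothesis g_S : forall j, g (S j) = (INR j + a + 1) * g j.

Lemma gamma_moment_shift k p : g (k + p)%nat = g k * rising (INR k + a + 1) p.
Proof.
  induction p as [|p IH]; [rewrite Nat.add_0_r; simpl; ring|].
  rewrite Nat.add_succ_r, g_S, IH; simpl rising; rewrite plus_INR; ring.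
Qed.

Lemma gamma_moment_falling d : forall k, falling (INR (k + d) + a) d * g k = g (k + d)%nat.
Proof.
  induction d as [|d IH]; intros k; [rewrite Nat.add_0_r; simpl; ring|].
  simpl falling; replace (k + S d)%nat with (S k + d)%nat by lia.
  rewrite <- (IH (S k)), g_S, !plus_INR, !S_INR; ring.
Qed.

(* The coefficient form of [int_0^oo L_n^a(t) t^p t^a e^(-t) dt = 0]: each term is
   [(-1)^k C(n,k) (k+a+1)^(p rising)] times [g n / n!], a polynomial of degree [p < n] in [k]. *)
Lemma laguerre_coef_orth n p :
  (p < n)%nat -> sum_f_R0 (fun k => laguerre_coef n a k * g (k + p)%nat) n = 0.
Proof.
  intros Hp.
  assert (Hf : forall k, INR (fact k) <> 0) by (intros; apply not_0_INR, fact_neq_0).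
  rewrite (sum_eq _ (fun k => ((-1) ^ k * binomR n k * rising (INR k + a + 1) p)
                              * (g n / INR (fact n)))).
  - rewrite <- scal_sum; fold (alt_binom_sum n (fun k => rising (INR k + a + 1) p)).
    rewrite alt_binom_sum_diffn_zero; [ring|].
    apply (diffn_zero_le (S p)); [lia|].
    apply (diffn_zero_ext _ (fun k => rising (INR k + (a + 1)) p));
      [intros; f_equal; ring | apply diffn_zero_rising].
  - intros k Hk; unfold laguerre_coef, gbinom; rewrite gamma_moment_shift.
    assert (Hb := binomR_fact n k Hk).
    assert (Hgn := gamma_moment_falling (n - k) k).
    replace (k + (n - k))%nat with n in Hgn by lia.
    rewrite <- Hgn, <- Hb; field; repeat split; auto.
    intro H0; rewrite H0 in Hb; apply (Hf n); rewrite <- Hb; ring.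
Qed.

End GammaMoments.

(** * Polynomials in one and two variables *)

Lemma sum_mult_l (A : nat -> R) n a : a * sum_f_R0 A n = sum_f_R0 (fun i => a * A i) n.
Proof. induction n as [|n IH]; simpl; [|rewrite <- IH]; ring. Qed.

Lemma sum_mult_r (A : nat -> R) n a : sum_f_R0 A n * a = sum_f_R0 (fun i => A i * a) n.
Proof. induction n as [|n IH]; simpl; [|rewrite <- IH]; ring. Qed.

Lemma sum_single (A : nat -> R) i d :
  (i <= d)%nat -> (forall k, (k <= d)%nat -> k <> i -> A k = 0) -> sum_f_R0 A d = A i.
Proof.
  induction d as [|d IH]; intros Hi H; [simpl; replace i with 0%nat by lia; auto|].
  simpl; destruct (Nat.eq_dec i (S d)) as [->|Hne].
  - rewrite sum_eq_R0; [ring | intros k Hk; apply H; lia].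
  - rewrite IH, (H (S d)) by (try lia; intros; apply H; lia); ring.
Qed.

Lemma derivable_pt_lim_ext f g x l :
  (forall t, f t = g t) -> derivable_pt_lim f x l -> derivable_pt_lim g x l.
Proof. intros E H; apply is_derive_Reals, (is_derive_ext f); auto; apply is_derive_Reals, H. Qed.

Lemma derivable_pt_lim_eq f x l l' : derivable_pt_lim f x l -> l = l' -> derivable_pt_lim f x l'.
Proof. intros H ->; exact H. Qed.

Definition pow_sum (d : nat) (c : nat -> R) (e : nat -> nat) (x : R) : R :=
  sum_f_R0 (fun k => c k * x ^ e k) d.

Lemma derivable_pt_lim_pow_sum d c e x :
  derivable_pt_lim (pow_sum d c e) x
    (pow_sum d (fun k => c k * INR (e k)) (fun k => pred (e k)) x).
Proof.
  induction d as [|d IH].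
  - apply (derivable_pt_lim_ext (mult_real_fct (c 0%nat) (fun y => y ^ e 0%nat)));
      [reflexivity|].
    eapply derivable_pt_lim_eq;
      [apply derivable_pt_lim_scal, derivable_pt_lim_pow | unfold pow_sum; simpl; ring].
  - apply (derivable_pt_lim_ext (pow_sum d c e + mult_real_fct (c (S d)) (fun y => y ^ e (S d)))%F);
      [reflexivity|].
    eapply derivable_pt_lim_eq;
      [apply derivable_pt_lim_plus; [exact IH | apply derivable_pt_lim_scal, derivable_pt_lim_pow]
      | unfold pow_sum; simpl; ring].
Qed.

Lemma continuity_pt_pow_sum d c e x : continuity_pt (pow_sum d c e) x.
Proof. apply derivable_continuous_pt; eexists; apply derivable_pt_lim_pow_sum. Qed.

Definition poly1_le (d : nat) (g : R -> R) : Prop :=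
  exists c, forall x, g x = pow_sum d c (fun k => k) x.

Lemma poly1_le_ext d f g : (forall x, f x = g x) -> poly1_le d f -> poly1_le d g.
Proof. intros E [c Hc]; exists c; intros; rewrite <- E; auto. Qed.

Lemma poly1_le_pow_sum d c : poly1_le d (pow_sum d c (fun k => k)).
Proof. exists c; auto. Qed.

Lemma poly1_le_zero d : poly1_le d (fun _ => 0).
Proof. exists (fun _ => 0); intros x; symmetry; apply sum_eq_R0; intros; ring. Qed.

Lemma poly1_le_plus d f g : poly1_le d f -> poly1_le d g -> poly1_le d (fun x => f x + g x).
Proof.
  intros [c1 H1] [c2 H2]; exists (fun k => c1 k + c2 k); intros x.
  rewrite H1, H2; unfold pow_sum; rewrite <- sum_plus; apply sum_eq; intros; ring.
Qed.

Lemma poly1_le_scal d f a : poly1_le d f -> poly1_le d (fun x => a * f x).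
Proof.
  intros [c H]; exists (fun k => a * c k); intros x.
  rewrite H; unfold pow_sum; rewrite sum_mult_l; apply sum_eq; intros; ring.
Qed.

Lemma poly1_le_mon d i a : (i <= d)%nat -> poly1_le d (fun x => a * x ^ i).
Proof.
  intros Hi; exists (fun k => if Nat.eqb k i then a else 0); intros x; unfold pow_sum.
  rewrite (sum_single _ i d Hi), Nat.eqb_refl; auto.
  intros k _ Hk; apply Nat.eqb_neq in Hk; rewrite Hk; ring.
Qed.

Lemma poly1_le_sum d (F : nat -> R -> R) m :
  (forall k, (k <= m)%nat -> poly1_le d (F k)) ->
  poly1_le d (fun x => sum_f_R0 (fun k => F k x) m).
Proof.
  induction m as [|m IH]; intros H; simpl; [apply H; lia|].
  apply poly1_le_plus; [apply IH; intros; apply H | apply H]; lia.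
Qed.

Lemma poly1_le_continuity_pt d g x : poly1_le d g -> continuity_pt g x.
Proof.
  intros [c H]; apply (continuity_pt_ext (pow_sum d c (fun k => k))); auto.
  apply continuity_pt_pow_sum.
Qed.

Lemma poly1_le_top2 d g : poly1_le (S (S d)) g ->
  exists c a1 a2, forall x, g x = pow_sum d c (fun k => k) x + a1 * x ^ S d + a2 * x ^ S (S d).
Proof.
  intros [c H]; exists c, (c (S d)), (c (S (S d))); intros x.
  rewrite H; unfold pow_sum; simpl; ring.
Qed.

Lemma poly2_le_ext n f g : (forall x y, f x y = g x y) -> poly2_le n f -> poly2_le n g.
Proof. intros E [c H]; exists c; intros; rewrite <- E; auto. Qed.

Lemma poly2_le_zero n : poly2_le n (fun _ _ => 0).
Proof.
  exists (fun _ _ => 0); intros x y; symmetry.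
  apply sum_eq_R0; intros; apply sum_eq_R0; intros; destruct (Nat.leb _ _); ring.
Qed.

Lemma poly2_le_plus n f g :
  poly2_le n f -> poly2_le n g -> poly2_le n (fun x y => f x y + g x y).
Proof.
  intros [c1 H1] [c2 H2]; exists (fun i j => c1 i j + c2 i j); intros x y; rewrite H1, H2.
  rewrite <- sum_plus; apply sum_eq; intros; rewrite <- sum_plus; apply sum_eq; intros.
  destruct (Nat.leb _ _); ring.
Qed.

Lemma poly2_le_scal n f a : poly2_le n f -> poly2_le n (fun x y => a * f x y).
Proof.
  intros [c H]; exists (fun i j => a * c i j); intros x y; rewrite H.
  rewrite sum_mult_l; apply sum_eq; intros; rewrite sum_mult_l; apply sum_eq; intros.
  destruct (Nat.leb _ _); ring.
Qed.

Lemma poly2_le_mon n i j a : (i + j <= n)%nat -> poly2_le n (fun x y => a * x ^ i * y ^ j).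
Proof.
  intros Hij; exists (fun i' j' => if andb (Nat.eqb i' i) (Nat.eqb j' j) then a else 0).
  intros x y; symmetry.
  rewrite (sum_single _ i n) by (try lia; intros k _ Hk; apply Nat.eqb_neq in Hk;
    apply sum_eq_R0; intros; rewrite Hk; simpl; destruct (Nat.leb _ _); ring).
  rewrite (sum_single _ j n) by (try lia; intros k _ Hk; apply Nat.eqb_neq in Hk;
    rewrite Nat.eqb_refl, Hk; simpl; destruct (Nat.leb _ _); ring).
  rewrite !Nat.eqb_refl; replace (Nat.leb (i + j) n) with true by (symmetry; apply Nat.leb_le; lia).
  reflexivity.
Qed.

Lemma poly2_le_sum n (F : nat -> R -> R -> R) m :
  (forall k, (k <= m)%nat -> poly2_le n (F k)) ->
  poly2_le n (fun x y => sum_f_R0 (fun k => F k x y) m).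
Proof.
  induction m as [|m IH]; intros H; simpl; [apply H; lia|].
  apply poly2_le_plus; [apply IH; intros; apply H | apply H]; lia.
Qed.

Lemma poly2_le_double_sum n d (F : nat -> nat -> R -> R -> R) :
  (forall i j, (i + j <= d)%nat -> poly2_le n (F i j)) ->
  poly2_le n (fun x y => sum_f_R0 (fun i => sum_f_R0 (fun j =>
                           if Nat.leb (i + j) d then F i j x y else 0) d) d).
Proof.
  intros H; apply poly2_le_sum; intros i _; apply poly2_le_sum; intros j _.
  destruct (Nat.leb (i + j) d) eqn:Hb; [apply H, Nat.leb_le, Hb | apply poly2_le_zero].
Qed.

Lemma poly2_le_mono d e f : (d <= e)%nat -> poly2_le d f -> poly2_le e f.
Proof.
  intros Hde [c H]; apply (poly2_le_ext e (fun x y => sum_f_R0 (fun i => sum_f_R0 (fun j =>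
    if Nat.leb (i + j) d then c i j * x ^ i * y ^ j else 0) d) d)); [intros; symmetry; apply H|].
  apply poly2_le_double_sum; intros i j Hij; apply poly2_le_mon; lia.
Qed.

Lemma poly2_le_mult_mon d f a b :
  poly2_le d f -> poly2_le (d + a + b) (fun x y => x ^ a * y ^ b * f x y).
Proof.
  intros [c H]; apply (poly2_le_ext _ (fun x y => sum_f_R0 (fun i => sum_f_R0 (fun j =>
    if Nat.leb (i + j) d then c i j * x ^ (i + a) * y ^ (j + b) else 0) d) d)).
  - intros x y; rewrite H, sum_mult_l; apply sum_eq; intros; rewrite sum_mult_l; apply sum_eq; intros.
    destruct (Nat.leb _ _); [rewrite !pow_add|]; ring.
  - apply poly2_le_double_sum; intros i j Hij; apply poly2_le_mon; lia.
Qed.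

Lemma poly2_le_mult d1 d2 f g :
  poly2_le d1 f -> poly2_le d2 g -> poly2_le (d1 + d2) (fun x y => f x y * g x y).
Proof.
  intros [c H] Hg; apply (poly2_le_ext _ (fun x y => sum_f_R0 (fun i => sum_f_R0 (fun j =>
    if Nat.leb (i + j) d1 then c i j * (x ^ i * y ^ j * g x y) else 0) d1) d1)).
  - intros x y; rewrite H, sum_mult_r; apply sum_eq; intros; rewrite sum_mult_r; apply sum_eq; intros.
    destruct (Nat.leb _ _); ring.
  - apply poly2_le_double_sum; intros i j Hij; apply poly2_le_scal.
    apply (poly2_le_mono (d2 + i + j)); [lia | apply poly2_le_mult_mon, Hg].
Qed.

(** * Restriction to the parabola and divisibility by [y - x^2] *)

Fixpoint pow_diff_quot (j : nat) (a b : R) : R :=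
  match j with O => 0 | S j' => a ^ j' + b * pow_diff_quot j' a b end.

Lemma pow_diff_factor j a b : a ^ j - b ^ j = (a - b) * pow_diff_quot j a b.
Proof.
  induction j as [|j IH]; simpl; [ring|].
  replace (a * a ^ j - b * b ^ j) with ((a - b) * a ^ j + b * (a ^ j - b ^ j)) by ring.
  rewrite IH; ring.
Qed.

Lemma poly2_le_pow_diff_quot j : poly2_le (2 * j) (fun x y => pow_diff_quot j y (x ^ 2)).
Proof.
  induction j as [|j IH]; simpl; [apply poly2_le_zero|].
  apply poly2_le_plus.
  - apply (poly2_le_ext _ (fun x y => 1 * x ^ 0 * y ^ j)); [intros; simpl; ring|].
    apply poly2_le_mon; lia.
  - apply (poly2_le_ext _ (fun x y => x ^ 2 * y ^ 0 * pow_diff_quot j y (x ^ 2)));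
      [intros; simpl; ring|].
    apply (poly2_le_mono (2 * j + 2 + 0)); [lia | apply poly2_le_mult_mon, IH].
Qed.

Lemma poly2_le_sub_parabola n P : poly2_le n P ->
  exists S, poly2 S /\ forall x y, P x y - P x (x ^ 2) = (y - x ^ 2) * S x y.
Proof.
  intros [c H].
  exists (fun x y => sum_f_R0 (fun i => sum_f_R0 (fun j =>
    if Nat.leb (i + j) n then c i j * x ^ i * pow_diff_quot j y (x ^ 2) else 0) n) n).
  split.
  - exists (2 * n)%nat; apply poly2_le_double_sum; intros i j Hij.
    apply (poly2_le_mono (i + 2 * j)); [lia|].
    apply (poly2_le_ext _ (fun x y => c i j * x ^ i * y ^ 0 * pow_diff_quot j y (x ^ 2)));
      [intros; simpl; ring|].
    apply poly2_le_mult; [apply poly2_le_mon; lia | apply poly2_le_pow_diff_quot].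
  - intros x y; rewrite !H, <- minus_sum, sum_mult_l; apply sum_eq; intros i _.
    rewrite <- minus_sum, sum_mult_l; apply sum_eq; intros j _.
    destruct (Nat.leb _ _); [|ring].
    replace (c i j * x ^ i * y ^ j - c i j * x ^ i * (x ^ 2) ^ j)
      with (c i j * x ^ i * (y ^ j - (x ^ 2) ^ j)) by ring.
    rewrite pow_diff_factor; ring.
Qed.

Lemma poly1_le_parabola n P : poly2_le n P -> poly1_le (2 * n) (fun x => P x (x ^ 2)).
Proof.
  intros [c H]; apply (poly1_le_ext _ (fun x => sum_f_R0 (fun i => sum_f_R0 (fun j =>
    if Nat.leb (i + j) n then c i j * x ^ (i + 2 * j) else 0) n) n)).
  - intros x; rewrite H; apply sum_eq; intros; apply sum_eq; intros.
    destruct (Nat.leb _ _); [rewrite pow_add, pow_mult; ring | ring].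
  - apply poly1_le_sum; intros i _; apply poly1_le_sum; intros j _.
    destruct (Nat.leb (i + j) n) eqn:Hb; [|apply poly1_le_zero].
    apply Nat.leb_le in Hb; apply poly1_le_mon; lia.
Qed.

Lemma poly1_le_lift_parabola m g : poly1_le (2 * m) g ->
  exists Q, poly2_le m Q /\ forall x, Q x (x ^ 2) = g x.
Proof.
  intros [d H]; exists (fun x y => sum_f_R0 (fun k => d k * x ^ (k mod 2) * y ^ (k / 2)) (2 * m)).
  split.
  - apply poly2_le_sum; intros k Hk; apply poly2_le_mon.
    pose proof (Nat.div_mod_eq k 2); pose proof (Nat.mod_upper_bound k 2 ltac:(lia)); lia.
  - intros x; rewrite H; unfold pow_sum; apply sum_eq; intros k _.
    rewrite <- pow_mult, Rmult_assoc, <- pow_add; do 2 f_equal.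
    pose proof (Nat.div_mod_eq k 2); lia.
Qed.

(** * Laguerre polynomials *)

Lemma laguerre_pow_sum n a t : laguerre n a t = pow_sum n (laguerre_coef n a) (fun k => k) t.
Proof. unfold laguerre, pow_sum, laguerre_coef; apply sum_eq; intros; unfold Rdiv; ring. Qed.

Lemma laguerre_sq n a x :
  laguerre n a (x ^ 2) = pow_sum n (laguerre_coef n a) (fun k => 2 * k)%nat x.
Proof. rewrite laguerre_pow_sum; unfold pow_sum; apply sum_eq; intros; rewrite pow_mult; auto. Qed.

Lemma laguerre_sq_odd n a x :
  x * laguerre n a (x ^ 2) = pow_sum n (laguerre_coef n a) (fun k => S (2 * k)) x.
Proof.
  rewrite laguerre_sq; unfold pow_sum; rewrite sum_mult_l; apply sum_eq; intros; simpl; ring.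
Qed.

Lemma continuity_pt_laguerre n a t : continuity_pt (laguerre n a) t.
Proof.
  apply (continuity_pt_ext (pow_sum n (laguerre_coef n a) (fun k => k)));
    [intros; rewrite laguerre_pow_sum; auto | apply continuity_pt_pow_sum].
Qed.

Lemma laguerre_at_0 n a : laguerre n a 0 = gbinom (INR n + a) n.
Proof.
  unfold laguerre; rewrite (sum_single _ 0 n) by (try lia; intros k _ Hk; rewrite pow_i by lia;
    unfold Rdiv; ring).
  simpl; rewrite Nat.sub_0_r; field.
Qed.

Lemma falling_neq_0 r m : (forall j, (j < m)%nat -> r - INR j <> 0) -> falling r m <> 0.
Proof.
  induction m as [|m IH]; intros H; simpl; [lra|].
  apply Rmult_integral_contrapositive; split; [apply IH; intros; apply H | apply H]; lia.
Qed.

Lemma laguerre_at_0_neq_0 n a : a > -1 -> laguerre n a 0 <> 0.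
Proof.
  intros Ha; rewrite laguerre_at_0; unfold gbinom; apply Rmult_integral_contrapositive; split.
  - apply falling_neq_0; intros j Hj.
    assert (INR (S j) <= INR n) by (apply le_INR; lia); rewrite S_INR in *; lra.
  - apply Rinv_neq_0_compat, not_0_INR, fact_neq_0.
Qed.

Lemma laguerre_coef_top_neq_0 n a : laguerre_coef n a n <> 0.
Proof.
  unfold laguerre_coef, gbinom; rewrite Nat.sub_diag; simpl falling; simpl fact; simpl INR.
  assert ((-1) ^ n <> 0) by (apply pow_nonzero; lra).
  assert (INR (fact n) <> 0) by (apply not_0_INR, fact_neq_0).
  unfold Rdiv; rewrite Rinv_1, !Rmult_1_r.
  apply Rmult_integral_contrapositive; split; auto; apply Rinv_neq_0_compat; auto.
Qed.

Definition laguerre_d1 n a := pow_sum n (fun k => laguerre_coef n a k * INR k) pred.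

Definition laguerre_d2 n a :=
  pow_sum n (fun k => laguerre_coef n a k * INR k * INR (pred k)) (fun k => pred (pred k)).

Lemma derivable_pt_lim_laguerre n a t : derivable_pt_lim (laguerre n a) t (laguerre_d1 n a t).
Proof.
  apply (derivable_pt_lim_ext (pow_sum n (laguerre_coef n a) (fun k => k)));
    [intros; rewrite laguerre_pow_sum; auto | apply derivable_pt_lim_pow_sum].
Qed.

Lemma derivable_pt_lim_laguerre_d1 n a t :
  derivable_pt_lim (laguerre_d1 n a) t (laguerre_d2 n a t).
Proof. apply derivable_pt_lim_pow_sum. Qed.

Lemma sum_telescope_pow (u v : nat -> R) t N :
  u 0%nat = 0 -> (forall k, (k < N)%nat -> u (S k) + v k = 0) ->
  sum_f_R0 (fun k => u k * t ^ pred k + v k * t ^ k) N = v N * t ^ N.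
Proof.
  intros H0 H; induction N as [|N IH]; [simpl; rewrite H0; ring|].
  simpl sum_f_R0; rewrite IH by (intros; apply H; lia).
  assert (E := H N ltac:(lia)); replace (u (S N)) with (- v N) by lra; simpl; ring.
Qed.

(* The coefficient of [t^k] in [t L'' + (a + 1 - t) L' + n L] is
   [(k+1)(k+1+a) c_(k+1) + (n - k) c_k], which vanishes. *)
Lemma laguerre_coef_rec n a k : (k < n)%nat ->
  laguerre_coef n a (S k) * INR (S k) * (INR (S k) + a) + (INR n - INR k) * laguerre_coef n a k = 0.
Proof.
  intros Hk; unfold laguerre_coef, gbinom; set (q := (n - S k)%nat).
  replace (n - k)%nat with (S q) by (unfold q; lia).
  assert (En : INR n = INR q + INR k + 1)
    by (replace n with (q + S k)%nat by (unfold q; lia); rewrite plus_INR, S_INR; ring).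
  simpl falling; rewrite !fact_simpl, !mult_INR.
  assert (INR (fact q) <> 0) by (apply not_0_INR, fact_neq_0).
  assert (INR (fact k) <> 0) by (apply not_0_INR, fact_neq_0).
  assert (INR (S k) <> 0) by (apply not_0_INR; lia).
  assert (INR (S q) <> 0) by (apply not_0_INR; lia).
  rewrite En, !S_INR in *; simpl pow; field; auto.
Qed.

Lemma laguerre_ode n a t :
  t * laguerre_d2 n a t + (a + 1 - t) * laguerre_d1 n a t + INR n * laguerre n a t = 0.
Proof.
  rewrite laguerre_pow_sum; unfold laguerre_d1, laguerre_d2, pow_sum.
  rewrite !sum_mult_l, <- !sum_plus.
  rewrite (sum_eq _ (fun k => (laguerre_coef n a k * INR k * (INR k + a)) * t ^ pred k
                              + ((INR n - INR k) * laguerre_coef n a k) * t ^ k)).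
  - rewrite sum_telescope_pow; [ring | simpl; ring |].
    intros k Hk; rewrite <- (laguerre_coef_rec n a k Hk); ring.
  - intros k _; destruct k as [|[|k]]; [simpl; ring | simpl; ring |].
    simpl pred; rewrite !S_INR; simpl; ring.
Qed.

Lemma poly2_le_laguerre n a : poly2_le n (fun x y => laguerre n a y).
Proof.
  apply (poly2_le_ext _ (fun x y => sum_f_R0 (fun k => laguerre_coef n a k * x ^ 0 * y ^ k) n)).
  - intros x y; rewrite laguerre_pow_sum; unfold pow_sum; apply sum_eq; intros; simpl; ring.
  - apply poly2_le_sum; intros k Hk; apply poly2_le_mon; lia.
Qed.

Lemma poly2_le_x_laguerre n a : (1 <= n)%nat -> poly2_le n (fun x y => x * laguerre (n - 1) a y).
Proof.
  intros Hn; apply (poly2_le_ext _ (fun x y =>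
    sum_f_R0 (fun k => laguerre_coef (n - 1) a k * x ^ 1 * y ^ k) (n - 1))).
  - intros x y; rewrite laguerre_pow_sum; unfold pow_sum; rewrite sum_mult_l.
    apply sum_eq; intros; simpl; ring.
  - apply poly2_le_sum; intros k Hk; apply poly2_le_mon; lia.
Qed.

Lemma laguerre_sq_top n a : (1 <= n)%nat ->
  poly1_le (2 * (n - 1))
    (fun x => laguerre n a (x ^ 2) - laguerre_coef n a n * x ^ S (S (2 * (n - 1)))).
Proof.
  intros Hn; destruct n as [|n]; [lia|]; replace (S n - 1)%nat with n by lia.
  apply (poly1_le_ext _ (fun x => sum_f_R0 (fun k => laguerre_coef (S n) a k * x ^ (2 * k)) n)).
  - intros x; rewrite laguerre_sq; unfold pow_sum; rewrite tech5.
    replace (2 * S n)%nat with (S (S (2 * n))) by lia; ring.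
  - apply poly1_le_sum; intros k Hk; apply poly1_le_mon; lia.
Qed.

Lemma laguerre_sq_odd_top m a :
  poly1_le (2 * m) (fun x => x * laguerre m a (x ^ 2) - laguerre_coef m a m * x ^ S (2 * m)).
Proof.
  destruct m as [|m].
  - apply (poly1_le_ext _ (fun _ => 0)); [|apply poly1_le_zero].
    intros x; rewrite laguerre_sq_odd; unfold pow_sum; simpl; ring.
  - apply (poly1_le_ext _ (fun x => sum_f_R0 (fun k => laguerre_coef (S m) a k * x ^ S (2 * k)) m)).
    + intros x; rewrite laguerre_sq_odd; unfold pow_sum; rewrite tech5; ring.
    + apply poly1_le_sum; intros k Hk; apply poly1_le_mon; lia.
Qed.

(** * Gaussian integrals of polynomials *)

Lemma is_RInt_R_sq_gauss_pos g c l :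
  continuity_pt g c -> g c <> 0 -> is_RInt_R (fun x => g x * g x * exp (- x ^ 2)) l -> 0 < l.
Proof.
  intros Hc Hgc Hl; apply (is_RInt_R_pos (fun x => g x * g x * exp (- x ^ 2)) c); [| | |exact Hl].
  - intros x; apply Rmult_le_pos; [apply Rle_0_sqr | left; apply exp_pos].
  - apply (continuity_pt_ext (fun x => g x * g x * gauss_mon 0 x));
      [intros; unfold gauss_mon; ring|].
    apply continuity_pt_mult; [apply continuity_pt_mult; auto|].
    apply continuity_pt_filterlim, continuous_gauss_mon.
  - apply Rmult_lt_0_compat; [apply Rsqr_pos_lt, Hgc | apply exp_pos].
Qed.

Section GaussianIntegrals.

Variable M : R.
Hypothesis HM : forall j, is_RInt_R (gauss_mon j) (gauss_moment M j).

Lemma is_RInt_R_pow_sum_mon d c e m :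
  is_RInt_R (fun x => pow_sum d c e x * x ^ m * exp (- x ^ 2))
            (sum_f_R0 (fun k => c k * gauss_moment M (e k + m)) d).
Proof.
  apply (is_RInt_R_ext (fun x => sum_f_R0 (fun k => c k * gauss_mon (e k + m) x) d)).
  - intros x; unfold pow_sum, gauss_mon; rewrite !sum_mult_r.
    apply sum_eq; intros; rewrite pow_add; ring.
  - apply is_RInt_R_sum; intros k _; apply is_RInt_R_scal, HM.
Qed.

Lemma is_RInt_R_mult_pow_sum g d c e (w : nat -> R) :
  (forall k, (k <= d)%nat -> is_RInt_R (fun x => g x * x ^ e k * exp (- x ^ 2)) (w k)) ->
  is_RInt_R (fun x => g x * pow_sum d c e x * exp (- x ^ 2)) (sum_f_R0 (fun k => c k * w k) d).
Proof.
  intros H; apply (is_RInt_R_ext (fun x => sum_f_R0 (fun k =>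
                                  c k * (g x * x ^ e k * exp (- x ^ 2))) d)).
  - intros x; unfold pow_sum; rewrite sum_mult_l, sum_mult_r; apply sum_eq; intros; ring.
  - apply is_RInt_R_sum; intros k Hk; apply is_RInt_R_scal, H, Hk.
Qed.

Lemma is_RInt_R_poly1_le d1 d2 f1 f2 :
  poly1_le d1 f1 -> poly1_le d2 f2 -> exists l, is_RInt_R (fun x => f1 x * f2 x * exp (- x ^ 2)) l.
Proof.
  intros [c1 H1] [c2 H2]; eexists.
  apply (is_RInt_R_ext (fun x => f1 x * pow_sum d2 c2 (fun k => k) x * exp (- x ^ 2)));
    [intros; rewrite H2; auto|].
  apply is_RInt_R_mult_pow_sum; intros k _.
  apply (is_RInt_R_ext (fun x => pow_sum d1 c1 (fun k => k) x * x ^ k * exp (- x ^ 2)));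
    [intros; rewrite H1; auto | apply is_RInt_R_pow_sum_mon].
Qed.

Lemma is_RInt_R_orth_poly2 g d Q : poly2_le d Q ->
  (forall i j, (i + j <= d)%nat -> is_RInt_R (fun x => g x * x ^ (i + 2 * j) * exp (- x ^ 2)) 0) ->
  is_RInt_R (fun x => g x * Q x (x ^ 2) * exp (- x ^ 2)) 0.
Proof.
  intros [c H] Hg.
  apply (is_RInt_R_ext (fun x => sum_f_R0 (fun i => sum_f_R0 (fun j =>
    if Nat.leb (i + j) d then c i j * (g x * x ^ (i + 2 * j) * exp (- x ^ 2)) else 0) d) d)).
  - intros x; rewrite H, sum_mult_l, sum_mult_r; apply sum_eq; intros.
    rewrite sum_mult_l, sum_mult_r; apply sum_eq; intros.
    destruct (Nat.leb _ _); [rewrite pow_add, pow_mult |]; ring.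
  - apply (is_RInt_R_eq _ (sum_f_R0 (fun i => sum_f_R0 (fun j => 0) d) d)).
    + apply is_RInt_R_sum; intros i _; apply is_RInt_R_sum; intros j _.
      destruct (Nat.leb (i + j) d) eqn:Hb; [|apply is_RInt_R_zero].
      rewrite <- (Rmult_0_r (c i j)); apply is_RInt_R_scal, Hg, Nat.leb_le, Hb.
    + apply sum_eq_R0; intros; apply sum_eq_R0; auto.
Qed.

(* With [t = x^2], [int x^(2j) e^(-x^2) dx = Gamma(j + 1/2)] and
   [int x^(2j+2) e^(-x^2) dx = Gamma(j + 3/2)]: the Laguerre weights for [a = -1/2] and [a = 1/2]. *)
Lemma is_RInt_R_laguerre_even_mon n m : (m < 2 * n)%nat ->
  is_RInt_R (fun x => laguerre n (- (1/2)) (x ^ 2) * x ^ m * exp (- x ^ 2)) 0.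
Proof.
  intros Hm.
  apply (is_RInt_R_ext (fun x =>
           pow_sum n (laguerre_coef n (- (1/2))) (fun k => 2 * k)%nat x * x ^ m * exp (- x ^ 2)));
    [intros; rewrite laguerre_sq; auto|].
  eapply is_RInt_R_eq; [apply is_RInt_R_pow_sum_mon|].
  destruct (Nat.Even_or_Odd m) as [[p ->] | [p ->]].
  - assert (Hg : forall j, gauss_moment M (2 * S j)
                            = (INR j + - (1/2) + 1) * gauss_moment M (2 * j)).
    { intros j; replace (2 * S j)%nat with (S (S (2 * j))) by lia.
      change (gauss_moment M (S (S (2 * j))))
        with (INR (S (2 * j)) / 2 * gauss_moment M (2 * j)).
      rewrite S_INR, mult_INR; simpl INR; field. }
    rewrite <- (laguerre_coef_orth (- (1/2)) (fun j => gauss_moment M (2 * j)) Hg n p) by lia.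
    apply sum_eq; intros k _; do 2 f_equal; lia.
  - apply sum_eq_R0; intros k _; replace (2 * k + (2 * p + 1))%nat with (S (2 * (k + p))) by lia.
    rewrite gauss_moment_odd; ring.
Qed.

Lemma is_RInt_R_laguerre_odd_mon n m : (m < 2 * n + 1)%nat ->
  is_RInt_R (fun x => x * laguerre n (1/2) (x ^ 2) * x ^ m * exp (- x ^ 2)) 0.
Proof.
  intros Hm.
  apply (is_RInt_R_ext (fun x =>
           pow_sum n (laguerre_coef n (1/2)) (fun k => S (2 * k)) x * x ^ m * exp (- x ^ 2)));
    [intros; rewrite laguerre_sq_odd; auto|].
  eapply is_RInt_R_eq; [apply is_RInt_R_pow_sum_mon|].
  destruct (Nat.Even_or_Odd m) as [[p ->] | [p ->]].
  - apply sum_eq_R0; intros k _; replace (S (2 * k) + 2 * p)%nat with (S (2 * (k + p))) by lia.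
    rewrite gauss_moment_odd; ring.
  - assert (Hg : forall j, gauss_moment M (2 * S (S j))
                            = (INR j + 1/2 + 1) * gauss_moment M (2 * S j)).
    { intros j; replace (2 * S (S j))%nat with (S (S (2 * S j))) by lia.
      change (gauss_moment M (S (S (2 * S j))))
        with (INR (S (2 * S j)) / 2 * gauss_moment M (2 * S j)).
      rewrite S_INR, mult_INR, (S_INR j); simpl INR; field. }
    rewrite <- (laguerre_coef_orth (1/2) (fun j => gauss_moment M (2 * S j)) Hg n p) by lia.
    apply sum_eq; intros k _; do 2 f_equal; lia.
Qed.

End GaussianIntegrals.

Section LaguerreOrthogonality.

Variable M : R.
Hypothesis HM : forall j, is_RInt_R (gauss_mon j) (gauss_moment M j).

Lemma is_RInt_R_laguerre_even_orth n Q : (1 <= n)%nat -> poly2_le (n - 1) Q ->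
  is_RInt_R (fun x => laguerre n (- (1/2)) (x ^ 2) * Q x (x ^ 2) * exp (- x ^ 2)) 0.
Proof.
  intros Hn HQ; apply (is_RInt_R_orth_poly2 _ (n - 1) Q HQ); intros i j Hij.
  apply (is_RInt_R_laguerre_even_mon M HM); lia.
Qed.

Lemma is_RInt_R_laguerre_odd_orth n Q : (1 <= n)%nat -> poly2_le (n - 1) Q ->
  is_RInt_R (fun x => x * laguerre (n - 1) (1/2) (x ^ 2) * Q x (x ^ 2) * exp (- x ^ 2)) 0.
Proof.
  intros Hn HQ; apply (is_RInt_R_orth_poly2 _ (n - 1) Q HQ); intros i j Hij.
  apply (is_RInt_R_laguerre_odd_mon M HM); lia.
Qed.

Lemma is_RInt_R_laguerre_even_odd n : (1 <= n)%nat ->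
  is_RInt_R (fun x => laguerre n (- (1/2)) (x ^ 2) * (x * laguerre (n - 1) (1/2) (x ^ 2))
                      * exp (- x ^ 2)) 0.
Proof.
  intros Hn; apply (is_RInt_R_ext (fun x => laguerre n (- (1/2)) (x ^ 2)
      * pow_sum (n - 1) (laguerre_coef (n - 1) (1/2)) (fun k => S (2 * k)) x * exp (- x ^ 2)));
    [intros; rewrite laguerre_sq_odd; auto|].
  eapply is_RInt_R_eq; [apply is_RInt_R_mult_pow_sum with (w := fun _ => 0) |].
  - intros k Hk; apply (is_RInt_R_laguerre_even_mon M HM); lia.
  - apply sum_eq_R0; intros; ring.
Qed.

End LaguerreOrthogonality.

Lemma exists_sq_neq_0 (phi : R -> R) :
  continuity_pt phi 0 -> phi 0 <> 0 -> exists x, x <> 0 /\ phi (x ^ 2) <> 0.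
Proof.
  intros Hc H0; assert (Hp : 0 < Rabs (phi 0)) by (apply Rabs_pos_lt; auto).
  destruct (Hc _ Hp) as [d [Hd Hn]].
  set (x := Rmin 1 d / 2).
  assert (Hmin : 0 < Rmin 1 d) by (apply Rmin_glb_lt; lra).
  pose proof (Rmin_l 1 d); pose proof (Rmin_r 1 d).
  exists x; split; [unfold x; lra|]; intros Hz.
  assert (Hx : R_dist (phi (x ^ 2)) (phi 0) < Rabs (phi 0)).
  { destruct (Req_dec (x ^ 2) 0) as [E|E]; [rewrite E, R_dist_eq; auto|].
    apply Hn; split; [split; [exact I | auto]|].
    change (Rabs (x ^ 2 - 0) < d); rewrite Rminus_0_r, Rabs_pos_eq by (apply pow_le; unfold x; lra).
    unfold x; simpl; nra. }
  unfold R_dist in Hx; rewrite Hz, Rminus_0_l, Rabs_Ropp in Hx; lra.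
Qed.

Lemma is_RInt_R_self_pos n P c : poly2_le n P -> P c (c ^ 2) <> 0 ->
  exists l, is_RInt_R (fun x => P x (x ^ 2) * P x (x ^ 2) * exp (- x ^ 2)) l /\ l > 0.
Proof.
  intros HP Hc; destruct gauss_moments_ex as [M HM].
  assert (H1 := poly1_le_parabola n P HP).
  destruct (is_RInt_R_poly1_le M HM _ _ _ _ H1 H1) as [l Hl].
  exists l; split; auto.
  apply (is_RInt_R_sq_gauss_pos (fun x => P x (x ^ 2)) c); auto.
  apply (poly1_le_continuity_pt _ _ _ H1).
Qed.

Lemma in_Hn_intro n P : poly2_le n P ->
  (forall Q, poly2_le (n - 1) Q -> is_RInt_R (fun x => P x (x ^ 2) * Q x (x ^ 2) * exp (- x ^ 2)) 0) ->
  (exists l, is_RInt_R (fun x => P x (x ^ 2) * P x (x ^ 2) * exp (- x ^ 2)) l /\ l > 0) ->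
  in_Hn n P.
Proof.
  intros HP Horth [l [Hl Hpos]]; split; [split; [exact HP|] | split].
  - intros Hlow; assert (l = 0) by apply (is_RInt_R_unique _ _ _ Hl (Horth P Hlow)); lra.
  - intros Q HQ; apply is_RInt_R_integral_R, Horth, HQ.
  - exists l; split; [apply is_RInt_R_integral_R, Hl | exact Hpos].
Qed.

Definition Y1 (n : nat) (x y : R) : R := laguerre n (- (1/2)) y.
Definition Y2 (n : nat) (x y : R) : R := x * laguerre (n - 1) (1/2) y.

Lemma laguerre_sq_neq_0 n a : a > -1 -> exists c, c <> 0 /\ laguerre n a (c ^ 2) <> 0.
Proof.
  intros Ha; apply exists_sq_neq_0; [apply continuity_pt_laguerre | apply laguerre_at_0_neq_0, Ha].
Qed.

Lemma Y1_in_Hn n : (1 <= n)%nat -> in_Hn n (Y1 n).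
Proof.
  intros Hn; destruct gauss_moments_ex as [M HM].
  apply in_Hn_intro; [apply poly2_le_laguerre | |].
  - intros Q HQ; apply (is_RInt_R_laguerre_even_orth M HM), HQ; exact Hn.
  - apply (is_RInt_R_self_pos n _ 0); [apply poly2_le_laguerre|].
    unfold Y1; replace (0 ^ 2) with 0 by ring; apply laguerre_at_0_neq_0; lra.
Qed.

Lemma Y2_in_Hn n : (1 <= n)%nat -> in_Hn n (Y2 n).
Proof.
  intros Hn; destruct gauss_moments_ex as [M HM].
  apply in_Hn_intro; [apply poly2_le_x_laguerre, Hn | |].
  - intros Q HQ; apply (is_RInt_R_laguerre_odd_orth M HM), HQ; exact Hn.
  - destruct (laguerre_sq_neq_0 (n - 1) (1/2)) as [c [Hc Hl]]; [lra|].
    apply (is_RInt_R_self_pos n _ c); [apply poly2_le_x_laguerre, Hn|].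
    apply Rmult_integral_contrapositive; split; auto.
Qed.

Lemma ip_Y1_Y2 n : (1 <= n)%nat -> ip (Y1 n) (Y2 n) 0.
Proof.
  intros Hn; destruct gauss_moments_ex as [M HM].
  apply is_RInt_R_integral_R, (is_RInt_R_laguerre_even_odd M HM), Hn.
Qed.

Lemma Y1_Y2_indep n a b :
  cong_par (fun x y => a * Y1 n x y + b * Y2 n x y) (fun _ _ => 0) -> a = 0 /\ b = 0.
Proof.
  intros [S [_ HS]].
  assert (E : forall x, a * laguerre n (- (1/2)) (x ^ 2) + b * (x * laguerre (n - 1) (1/2) (x ^ 2)) = 0)
    by (intros x; specialize (HS x (x ^ 2)); unfold Y1, Y2 in HS; rewrite Rminus_diag in HS; lra).
  assert (Ha : a = 0).
  { specialize (E 0); replace (0 ^ 2) with 0 in E by ring.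
    rewrite Rmult_0_l, Rmult_0_r, Rplus_0_r in E.
    destruct (Rmult_integral _ _ E) as [|Hl]; auto.
    exfalso; revert Hl; apply laguerre_at_0_neq_0; lra. }
  split; auto.
  destruct (laguerre_sq_neq_0 (n - 1) (1/2)) as [c [Hc Hl]]; [lra|].
  specialize (E c); rewrite Ha, Rmult_0_l, Rplus_0_l in E.
  destruct (Rmult_integral _ _ E) as [|E']; auto.
  exfalso; destruct (Rmult_integral _ _ E'); contradiction.
Qed.

Lemma cong_par_intro n P Q : poly2_le n P -> poly2_le n Q ->
  (forall x, P x (x ^ 2) = Q x (x ^ 2)) -> cong_par P Q.
Proof.
  intros HP HQ E.
  assert (HF : poly2_le n (fun x y => P x y - Q x y)).
  { apply (poly2_le_ext _ (fun x y => P x y + (-1) * Q x y)); [intros; ring|].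
    apply poly2_le_plus, poly2_le_scal; auto. }
  destruct (poly2_le_sub_parabola n _ HF) as [S [HS HSe]].
  exists S; split; auto; intros x y; rewrite <- HSe, E; ring.
Qed.

(* Subtracting multiples of [Y1] and [Y2] removes the coefficients of [x^(2n)] and [x^(2n-1)]. *)
Lemma poly1_le_parabola_sub_Y n P : (1 <= n)%nat -> poly2_le n P ->
  exists a b, poly1_le (2 * (n - 1))
    (fun x => P x (x ^ 2) - (a * Y1 n x (x ^ 2) + b * Y2 n x (x ^ 2))).
Proof.
  intros Hn HP; assert (Hc := poly1_le_parabola n P HP).
  replace (2 * n)%nat with (S (S (2 * (n - 1)))) in Hc by lia.
  destruct (poly1_le_top2 _ _ Hc) as [c [a1 [a2 Hdec]]].
  set (l1 := laguerre_coef n (- (1/2)) n); set (l2 := laguerre_coef (n - 1) (1/2) (n - 1)).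
  assert (Hl1 : l1 <> 0) by apply laguerre_coef_top_neq_0.
  assert (Hl2 : l2 <> 0) by apply laguerre_coef_top_neq_0.
  exists (a2 / l1), (a1 / l2).
  apply (poly1_le_ext _ (fun x => pow_sum (2 * (n - 1)) c (fun k => k) x
     + (- (a2 / l1)) * (laguerre n (- (1/2)) (x ^ 2) - l1 * x ^ S (S (2 * (n - 1))))
     + (- (a1 / l2)) * (x * laguerre (n - 1) (1/2) (x ^ 2) - l2 * x ^ S (2 * (n - 1))))).
  - intros x; rewrite Hdec; unfold Y1, Y2; field; auto.
  - apply poly1_le_plus; [apply poly1_le_plus|]; [apply poly1_le_pow_sum | |];
      apply poly1_le_scal; [apply laguerre_sq_top, Hn | apply laguerre_sq_odd_top].
Qed.

Lemma poly1_le_self_orth_zero d g :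
  poly1_le d g -> is_RInt_R (fun x => g x * g x * exp (- x ^ 2)) 0 -> forall x, g x = 0.
Proof.
  intros Hg H0 x; destruct (Req_dec (g x) 0) as [|Hne]; auto; exfalso.
  assert (0 < 0); [|lra].
  apply (is_RInt_R_sq_gauss_pos g x); [apply (poly1_le_continuity_pt d) | |]; auto.
Qed.

(* [P - a Y1 - b Y2] restricts to the parabola as a polynomial of degree [< 2n]; lifted to a
   polynomial [Q] of degree [< n], it is orthogonal to [Q], i.e. to itself. *)
Lemma Y1_Y2_span n P : (1 <= n)%nat -> in_Hn n P ->
  exists a b, cong_par P (fun x y => a * Y1 n x y + b * Y2 n x y).
Proof.
  intros Hn [[HP _] [Horth _]].
  destruct (poly1_le_parabola_sub_Y n P Hn HP) as [a [b Hg]].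
  set (g := fun x => P x (x ^ 2) - (a * Y1 n x (x ^ 2) + b * Y2 n x (x ^ 2))) in Hg.
  destruct (poly1_le_lift_parabola _ _ Hg) as [Q [HQ HQg]].
  destruct gauss_moments_ex as [M HM].
  assert (HPQ : is_RInt_R (fun x => P x (x ^ 2) * Q x (x ^ 2) * exp (- x ^ 2)) 0).
  { destruct (is_RInt_R_poly1_le M HM _ _ (fun x => P x (x ^ 2)) (fun x => Q x (x ^ 2))
                (poly1_le_parabola n P HP) (poly1_le_parabola _ Q HQ)) as [l [Hex _]].
    apply integral_R_is_RInt_R, Horth, HQ; exact Hex. }
  assert (Hgg : is_RInt_R (fun x => g x * g x * exp (- x ^ 2)) 0).
  { apply (is_RInt_R_ext (fun x => P x (x ^ 2) * Q x (x ^ 2) * exp (- x ^ 2)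
        + (- a) * (laguerre n (- (1/2)) (x ^ 2) * Q x (x ^ 2) * exp (- x ^ 2))
        + (- b) * (x * laguerre (n - 1) (1/2) (x ^ 2) * Q x (x ^ 2) * exp (- x ^ 2)))).
    { intros x; rewrite HQg; unfold g, Y1, Y2; ring. }
    apply (is_RInt_R_eq _ (0 + - a * 0 + - b * 0)); [|ring].
    apply is_RInt_R_plus; [apply is_RInt_R_plus; [exact HPQ|] |]; apply is_RInt_R_scal;
      [apply (is_RInt_R_laguerre_even_orth M HM) | apply (is_RInt_R_laguerre_odd_orth M HM)]; auto. }
  exists a, b; apply (cong_par_intro n); auto.
  - apply poly2_le_plus; apply poly2_le_scal;
      [apply poly2_le_laguerre | apply poly2_le_x_laguerre, Hn].
  - intros x; assert (H := poly1_le_self_orth_zero _ _ Hg Hgg x); unfold g in H; lra.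
Qed.

Definition solves_pde (n : nat) (u : R -> R -> R) : Prop :=
  exists ux uy uxy uyy : R -> R -> R,
    forall x y : R,
      derivable_pt_lim (fun t => u t y) x (ux x y) /\
      derivable_pt_lim (fun t => u x t) y (uy x y) /\
      derivable_pt_lim (fun t => uy t y) x (uxy x y) /\
      derivable_pt_lim (fun t => uy x t) y (uyy x y) /\
      x * uxy x y + y * uyy x y + (1/2 - y) * uy x y - x * ux x y = - INR n * u x y.

Lemma derivable_pt_lim_mult_id c x : derivable_pt_lim (fun t => t * c) x c.
Proof.
  apply (derivable_pt_lim_ext (mult_real_fct c id)); [intros; unfold mult_real_fct, id; ring|].
  eapply derivable_pt_lim_eq; [apply derivable_pt_lim_scal, derivable_pt_lim_id | ring].
Qed.

Lemma Y1_pde n : solves_pde n (Y1 n).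
Proof.
  exists (fun _ _ => 0), (fun _ y => laguerre_d1 n (- (1/2)) y),
         (fun _ _ => 0), (fun _ y => laguerre_d2 n (- (1/2)) y).
  intros x y; unfold Y1; repeat split.
  - apply derivable_pt_lim_const.
  - apply derivable_pt_lim_laguerre.
  - apply derivable_pt_lim_const.
  - apply derivable_pt_lim_laguerre_d1.
  - assert (O := laguerre_ode n (- (1/2)) y).
    replace (1/2 - y) with (- (1/2) + 1 - y) by field; lra.
Qed.

Lemma Y2_pde n : (1 <= n)%nat -> solves_pde n (Y2 n).
Proof.
  intros Hn; set (m := (n - 1)%nat).
  exists (fun _ y => laguerre m (1/2) y), (fun x y => x * laguerre_d1 m (1/2) y),
         (fun _ y => laguerre_d1 m (1/2) y), (fun x y => x * laguerre_d2 m (1/2) y).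
  intros x y; unfold Y2; fold m; repeat split.
  - apply derivable_pt_lim_mult_id.
  - apply (derivable_pt_lim_ext (mult_real_fct x (laguerre m (1/2)))); [reflexivity|].
    apply derivable_pt_lim_scal, derivable_pt_lim_laguerre.
  - apply derivable_pt_lim_mult_id.
  - apply (derivable_pt_lim_ext (mult_real_fct x (laguerre_d1 m (1/2)))); [reflexivity|].
    apply derivable_pt_lim_scal, derivable_pt_lim_laguerre_d1.
  - assert (O := laguerre_ode m (1/2) y).
    assert (En : INR n = INR m + 1) by (rewrite <- S_INR; f_equal; unfold m; lia).
    rewrite En; revert O; generalize (laguerre_d1 m (1/2) y) (laguerre_d2 m (1/2) y)
      (laguerre m (1/2) y) (INR m); intros D1 D2 L k O.
    replace (x * D1 + y * (x * D2) + (1/2 - y) * (x * D1) - x * L)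
      with (x * (y * D2 + (1/2 + 1 - y) * D1 + k * L) - (k + 1) * (x * L)) by ring.
    rewrite O; ring.
Qed.

Theorem proposition4p2 (n : nat) (hn : (1 <= n)%nat) :
  let Y1 := fun x y : R => laguerre n (- (1/2)) y in
  let Y2 := fun x y : R => x * laguerre (n - 1) (1/2) y in
  (* Y1, Y2 belong to H_n and are orthogonal *)
  in_Hn n Y1 /\ in_Hn n Y2 /\ ip Y1 Y2 0 /\
  (* linearly independent modulo the ideal *)
  (forall a b : R, cong_par (fun x y => a * Y1 x y + b * Y2 x y) (fun _ _ => 0) ->
     a = 0 /\ b = 0) /\
  (* spanning H_n modulo the ideal *)
  (forall P, in_Hn n P -> exists a b : R,
     cong_par P (fun x y => a * Y1 x y + b * Y2 x y)) /\
  (* both satisfy the PDE *)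
  (forall u : R -> R -> R, (u = Y1 \/ u = Y2) ->
     exists ux uy uxy uyy : R -> R -> R,
       forall x y : R,
         derivable_pt_lim (fun t => u t y) x (ux x y) /\
         derivable_pt_lim (fun t => u x t) y (uy x y) /\
         derivable_pt_lim (fun t => uy t y) x (uxy x y) /\
         derivable_pt_lim (fun t => uy x t) y (uyy x y) /\
         x * uxy x y + y * uyy x y + (1/2 - y) * uy x y - x * ux x y
           = - INR n * u x y).
Proof.
  intros Y1' Y2'.
  change Y1' with (Y1 n); change Y2' with (Y2 n).
  split; [apply Y1_in_Hn, hn|].
  split; [apply Y2_in_Hn, hn|].
  split; [apply ip_Y1_Y2, hn|].
  split; [apply Y1_Y2_indep|].
  split; [intros P; apply Y1_Y2_span, hn|].
  intros u [-> | ->]; [apply Y1_pde | apply Y2_pde, hn].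
Qed.
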